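(* Let $\Sigma$ be a finite set of tokens, $c$ a context, $M_1,M_2,M_b$ language models, and $f$ a min-bounded function with constant $\lambda_f$. Let $t\in\Sigma$ be a token that is $\alpha$-exposed by $M_1$ over $M_b$ at $c$ and $\beta$-exposed by $M_2$ over $M_b$ at $c$. Let $M:=DAGG_f(M_1,M_2)$. Then $t$ is $\le\gamma\min(\alpha,\beta)$-exposed by $M$ over $M_b$ at $c$, where $\gamma=\lambda_f\,\overline{f_c}(M_1,M_2)$.
   Context: Let $n=|\Sigma|$. A context is a finite sequence of tokens from $\Sigma$. A language model $M$ assigns to every context $c$ and token $t\in\Sigma$ a probability $p_M(t\mid c)>0$, with $\sum_{t\in\Sigma}p_M(t\mid c)=1$. For $g:\Sigma\to\mathbb{R}_{>0}$, $GM(g(t)):=\exp\big(\tfrac1n\sum_{t\in\Sigma}\log g(t)\big)$. Typical probability: $tp_c(M):=GM(p_M(t\mid c))$; relative probability: $rp_M(t\mid c):=p_M(t\mid c)/tp_c(M)$. Typical probability ratio: $tpr_c(M_1,M_2):=GM\big(\tfrac{p_{M_1}(t\mid c)}{p_{M_2}(t\mid c)}\big)$. A token $t$ is $\alpha$-exposed by $M_1$ over $M_2$ at $c$ if $\frac{p_{M_1}(t\mid c)}{p_{M_2}(t\mid c)\cdot tpr_c(M_1,M_2)}=\alpha$; it is $\le\alpha$-exposed if it is $\beta$-exposed for some $\beta\le\alpha$. A function $f:\mathbb{R}_{>0}^2\to\mathbb{R}_{>0}$ is proper-avg if $\min(x,y)\le f(x,y)\le\max(x,y)$ for all $x,y>0$;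 it is min-bounded if it is proper-avg and there is a constant $\lambda_f$ with $f(x,y)\le\lambda_f\min(x,y)$ for all $x,y>0$. Set $M(t\mid c):=f(rp_{M_1}(t\mid c),rp_{M_2}(t\mid c))$; $DAGG_f(M_1,M_2)$ is the language model $M$ with $p_M(t\mid c):=\frac{M(t\mid c)}{\sum_{t'\in\Sigma}M(t'\mid c)}$. Define $\overline{f_c}(M_1,M_2):=GM\big(M(t\mid c)^{-1}\big)$. *)

From HB Require Import structures.
From mathcomp Require Import all_boot all_order all_algebra.
From mathcomp Require Import all_classical all_reals all_analysis.
Set Implicit Arguments. Unset Strict Implicit. Unset Printing Implicit Defensive.
Import Order.TTheory GRing.Theory Num.Theory.
Local Open Scope ring_scope.

Section Defs.
Variables (R : realType) (T : finType).

Definition context := seq T.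

Definition is_LM (p : context -> T -> R) : Prop :=
  (forall c t, 0 < p c t) /\ (forall c, \sum_(t : T) p c t = 1).

Definition GM (g : T -> R) : R :=
  expR ((#|T|%:R)^-1 * \sum_(t : T) ln (g t)).

Definition tp (p : context -> T -> R) (c : context) : R := GM (fun t => p c t).

Definition rp (p : context -> T -> R) (c : context) (t : T) : R := p c t / tp p c.

Definition tpr (p1 p2 : context -> T -> R) (c : context) : R :=
  GM (fun t => p1 c t / p2 c t).

Definition exposed (p1 p2 : context -> T -> R) (c : context) (t : T) (a : R) : Prop :=
  p1 c t / (p2 c t * tpr p1 p2 c) = a.

Definition le_exposed (p1 p2 : context -> T -> R) (c : context) (t : T) (a : R) : Prop :=
  exists b, b <= a /\ exposed p1 p2 c t b.

Definition proper_avg (f : R -> R -> R) : Prop :=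
  forall x y, 0 < x -> 0 < y -> Num.min x y <= f x y /\ f x y <= Num.max x y.

Definition min_bounded (f : R -> R -> R) (lam : R) : Prop :=
  proper_avg f /\ forall x y, 0 < x -> 0 < y -> f x y <= lam * Num.min x y.

Definition Mfun (f : R -> R -> R) (p1 p2 : context -> T -> R) (c : context) (t : T) : R :=
  f (rp p1 c t) (rp p2 c t).

Definition DAGG (f : R -> R -> R) (p1 p2 : context -> T -> R) : context -> T -> R :=
  fun c t => Mfun f p1 p2 c t / \sum_(t' : T) Mfun f p1 p2 c t'.

Definition fbar (f : R -> R -> R) (p1 p2 : context -> T -> R) (c : context) : R :=
  GM (fun t => (Mfun f p1 p2 c t)^-1).

End Defs.

From mathcomp Require Import all_boot all_order all_algebra.
From mathcomp Require Import all_classical all_reals all_analysis.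
From mathcomp Require Import ring.
Import Order.TTheory GRing.Theory Num.Theory.
Local Open Scope ring_scope.

(* Since tpr (M1, Mb) = tp M1 / tp Mb, the exposure of t is the ratio of
   relative probabilities rp_M1 t / rp_Mb t.  For M = DAGG_f (M1, M2) the
   normalising sum cancels in rp_M t, which is M(t | c) * fbar; bounding
   M(t | c) = f (rp_M1 t, rp_M2 t) by lam * min (rp_M1 t, rp_M2 t) and dividing
   by rp_Mb t gives the bound lam * fbar * min (alpha, beta). *)

Section GeometricMean.
Context {R : realType} {T : finType}.
Implicit Types g h : T -> R.

Lemma GM_gt0 g : 0 < GM g.
Proof. exact: expR_gt0. Qed.

Lemma GMM g h : (forall t, 0 < g t) -> (forall t, 0 < h t) ->
  GM (fun t => g t * h t) = GM g * GM h.
Proof.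
move=> g_gt0 h_gt0; rewrite /GM -expRD -mulrDr -big_split /=.
by congr (expR (_ * _)); apply: eq_bigr => t _; rewrite lnM ?posrE.
Qed.

Lemma GMV g : (forall t, 0 < g t) -> GM (fun t => (g t)^-1) = (GM g)^-1.
Proof.
move=> g_gt0; rewrite /GM -expRN -mulrN -sumrN.
by congr (expR (_ * _)); apply: eq_bigr => t _; rewrite lnV ?posrE.
Qed.

Lemma GM_cst (k : R) : 0 < k -> (0 < #|T|)%N -> GM (fun _ : T => k) = k.
Proof.
move=> k_gt0 T_gt0; rewrite /GM sumr_const -[ln k *+ _]mulr_natl.
by rewrite mulKf ?lnK ?posrE // pnatr_eq0 -lt0n.
Qed.

End GeometricMean.

Section Exposure.
Context {R : realType} {T : finType}.
Implicit Types p : context T -> T -> R.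

Definition exposure p1 p2 (c : context T) (t : T) : R :=
  p1 c t / (p2 c t * tpr p1 p2 c).

Lemma le_exposedP p1 p2 c t a :
  le_exposed p1 p2 c t a <-> exposure p1 p2 c t <= a.
Proof.
split=> [[b [le_ba exp_b]] | le_a]; first by rewrite /exposure exp_b.
by exists (exposure p1 p2 c t).
Qed.

Lemma rp_gt0 {p} : (forall c t, 0 < p c t) -> forall c t, 0 < rp p c t.
Proof. by move=> p_gt0 c t; rewrite divr_gt0 ?GM_gt0. Qed.

Lemma tprE p1 p2 c : (forall c u, 0 < p1 c u) -> (forall c u, 0 < p2 c u) ->
  tpr p1 p2 c = tp p1 c / tp p2 c.
Proof.
move=> p1_gt0 p2_gt0; rewrite /tpr /tp -GMV // -GMM // => u.
by rewrite invr_gt0.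
Qed.

Lemma exposure_rp p1 p2 c t :
  (forall c u, 0 < p1 c u) -> (forall c u, 0 < p2 c u) ->
  exposure p1 p2 c t = rp p1 c t / rp p2 c t.
Proof.
move=> p1_gt0 p2_gt0; rewrite /exposure /rp tprE //.
have tp_gt0 p : 0 < tp p c by exact: GM_gt0.
by field; rewrite ?gt_eqF ?p1_gt0 ?p2_gt0 ?tp_gt0.
Qed.

Lemma exposed_rp {p1 p2 c t a} :
  (forall c u, 0 < p1 c u) -> (forall c u, 0 < p2 c u) ->
  exposed p1 p2 c t a -> a = rp p1 c t / rp p2 c t.
Proof. by move=> p1_gt0 p2_gt0 <-; exact: exposure_rp. Qed.

End Exposure.

Section DynamicAggregation.
Context {R : realType} {T : finType}.
Context {f : R -> R -> R} {p1 p2 : context T -> T -> R}.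
Hypothesis f_avg : proper_avg f.
Hypotheses (p1_gt0 : forall c t, 0 < p1 c t) (p2_gt0 : forall c t, 0 < p2 c t).

Lemma Mfun_gt0 c t : 0 < Mfun f p1 p2 c t.
Proof.
have rp1_gt0 := rp_gt0 p1_gt0 c t; have rp2_gt0 := rp_gt0 p2_gt0 c t.
have [f_ge_min _] := f_avg _ _ rp1_gt0 rp2_gt0.
by apply: lt_le_trans f_ge_min; rewrite lt_min rp1_gt0.
Qed.

Lemma sum_Mfun_gt0 c (t : T) : 0 < \sum_(u : T) Mfun f p1 p2 c u.
Proof.
rewrite (bigD1 t) //= ltr_wpDr ?Mfun_gt0 // sumr_ge0 // => u _.
exact/ltW/Mfun_gt0.
Qed.

Lemma DAGG_gt0 c t : 0 < DAGG f p1 p2 c t.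
Proof. by rewrite divr_gt0 ?Mfun_gt0 ?(sum_Mfun_gt0 c t). Qed.

Lemma rp_DAGG c t : rp (DAGG f p1 p2) c t = Mfun f p1 p2 c t * fbar f p1 p2 c.
Proof.
have T_gt0 : (0 < #|T|)%N by apply/card_gt0P; exists t.
have M_gt0 := Mfun_gt0 c; have S_gt0 := sum_Mfun_gt0 c t.
rewrite /rp /tp /DAGG /fbar GMM ?GMV ?GM_cst ?invr_gt0 //.
by field; rewrite ?gt_eqF ?GM_gt0.
Qed.

End DynamicAggregation.

Theorem corollary1 (R : realType) (T : finType) (f : R -> R -> R) (lam : R)
  (p1 p2 pb : context T -> T -> R) (c : context T) (t : T) (alpha beta : R) :
  is_LM p1 -> is_LM p2 -> is_LM pb ->
  min_bounded f lam ->
  exposed p1 pb c t alpha ->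
  exposed p2 pb c t beta ->
  le_exposed (DAGG f p1 p2) pb c t (lam * fbar f p1 p2 c * Num.min alpha beta).
Proof.
move=> [p1_gt0 _] [p2_gt0 _] [pb_gt0 _] [f_avg f_le_min] e1 e2.
rewrite (exposed_rp p1_gt0 pb_gt0 e1) (exposed_rp p2_gt0 pb_gt0 e2).
have DAGG_gt0 := DAGG_gt0 f_avg p1_gt0 p2_gt0.
apply/le_exposedP; rewrite exposure_rp // (rp_DAGG f_avg p1_gt0 p2_gt0).
have rpb_gt0 := rp_gt0 pb_gt0 c t.
rewrite -minr_pMl ?invr_ge0 ?(ltW rpb_gt0) // mulrA ler_pM2r ?invr_gt0 //.
by rewrite mulrAC ler_pM2r ?GM_gt0 // f_le_min ?rp_gt0.
Qed.
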